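(* Fix $c > 0$ and $p \in (0,1)$. For $x^{\text{obs}} > c$ let $\theta_{\text{2-sided}}(p)$ denote the unique $\theta \in \mathbb{R}$ solving $F_{\text{2-sided}}(x^{\text{obs}},\theta,c) = p$. Then as $x^{\text{obs}} \downarrow c$, $\theta_{\text{2-sided}}(p)$ converges to a finite limit, namely the unique $\theta \in \mathbb{R}$ solving $$p = \frac{\Phi(-c-\theta)}{\Phi(-c-\theta) + \Phi(-c+\theta)}.$$ In particular, for $p = 0.5$ the limit is $0$, i.e. the conditionally median-unbiased estimator $\theta_{\text{2-sided}}(0.5) \to 0$ as $x^{\text{obs}} \downarrow c$.
   Context: Let $\Phi$ denote the standard normal distribution function and let $c>0$. For $X \sim N(\theta,1)$, the distribution function of $X$ conditional on $|X| \ge c$ is $$F_{\text{2-sided}}(a,\theta,c) = \Pr(X \le a \mid |X| \ge c) = \frac{\min\big(\Phi(a-\theta), \Phi(-c-\theta)\big) + \mathbf{1}_{a > c}\big(\Phi(a-\theta) - \Phi(c-\theta)\big)}{\Phi(-c-\theta) + \Phi(-c+\theta)},$$ where $\mathbf{1}_{a>c}$ equals $1$ if $a > c$ and $0$ otherwise. For $x^{\text{obs}} > c$ the map $\theta \mapsto F_{\text{2-sided}}(x^{\text{obs}},\theta,c)$ is assumed (as in the paper) to be a continuous strictly decreasing bijection from $\mathbb{R}$ onto $(0,1)$, so that $\theta_{\text{2-sided}}(p)$ is well defined. *)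

From Stdlib Require Import Reals.
From Coquelicot Require Import Coquelicot.
Open Scope R_scope.

Definition phi_dens (t : R) : R := exp (- t ^ 2 / 2) / sqrt (2 * PI).

(* standard normal distribution function: Phi x = int_{-oo}^x phi_dens,
   written as 1/2 + int_0^x phi_dens (the density is even and integrates to 1) *)
Definition Phi (x : R) : R := / 2 + RInt phi_dens 0 x.

Definition ind_gt (a c : R) : R := if Rlt_dec c a then 1 else 0.

(* F_{2-sided}(a, theta, c) = Pr(X <= a | |X| >= c), X ~ N(theta,1) *)
Definition F2 (a theta c : R) : R :=
  (Rmin (Phi (a - theta)) (Phi (- c - theta))
     + ind_gt a c * (Phi (a - theta) - Phi (c - theta)))
  / (Phi (- c - theta) + Phi (- c + theta)).

Definition G2 (theta c : R) : R :=
  Phi (- c - theta) / (Phi (- c - theta) + Phi (- c + theta)).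

(* Write D t := Phi(-c-t) + Phi(-c+t) ([tail_mass] below).  For x > c,
   F2 x t c - G2 t c = (Phi(x-t) - Phi(c-t)) / D t lies in (0, (x-c) / (2 D t)],
   because the normal density is positive and bounded by 1/2.  So F2 x . c
   converges to the strictly decreasing continuous function G2 . c, uniformly
   where D is bounded below.  The root L of G2 . c = p exists by the intermediate
   value theorem, and th x is trapped between L (as G2 < F2) and L + eps (as
   F2 x (L + eps) c < p once x - c < 2 (p - G2 (L + eps) c) D (L + eps)).
   Positivity of Phi, which would need the Gaussian integral, is read off from
   the assumption 0 < F2 < 1. *)

From Stdlib Require Import Reals Lra.
From Coquelicot Require Import Coquelicot.
Open Scope R_scope.

Lemma phi_dens_continuous x : continuous phi_dens x.
Proof.
  apply (ex_derive_continuous (K := R_AbsRing) (V := R_NormedModule)).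
  unfold phi_dens; auto_derive; auto.
Qed.

Lemma phi_dens_pos x : 0 < phi_dens x.
Proof.
  unfold phi_dens; apply Rdiv_lt_0_compat; [apply exp_pos|].
  apply sqrt_lt_R0; pose proof PI_RGT_0; lra.
Qed.

Lemma phi_dens_le_half x : phi_dens x <= / 2.
Proof.
  unfold phi_dens.
  assert (Hexp : exp (- x ^ 2 / 2) <= 1).
  { rewrite <- exp_0.
    destruct (Req_dec x 0) as [->|Hx].
    - right; f_equal; field.
    - left; apply exp_increasing; assert (0 < x ^ 2) by (simpl; nra); nra. }
  assert (Hsqrt : 2 < sqrt (2 * PI)).
  { rewrite <- (sqrt_square 2) at 1 by lra.
    apply sqrt_lt_1_alt; pose proof PI2_3_2; lra. }
  apply Rmult_le_reg_r with (sqrt (2 * PI)); [lra|].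
  unfold Rdiv; rewrite Rmult_assoc, Rinv_l by lra; lra.
Qed.

Lemma ex_RInt_phi_dens a b : ex_RInt phi_dens a b.
Proof.
  apply (ex_RInt_continuous (V := R_CompleteNormedModule)).
  intros; apply phi_dens_continuous.
Qed.

Lemma Phi_sub a b : Phi b - Phi a = RInt phi_dens a b.
Proof.
  unfold Phi; rewrite <- (RInt_Chasles phi_dens 0 a b) by apply ex_RInt_phi_dens.
  unfold plus; simpl; ring.
Qed.

Lemma Phi_lt a b : a < b -> Phi a < Phi b.
Proof.
  intros Hab; enough (0 < Phi b - Phi a) by lra.
  rewrite Phi_sub; apply RInt_gt_0; auto.
  - intros; apply phi_dens_pos.
  - intros; apply phi_dens_continuous.
Qed.

Lemma Phi_le a b : a <= b -> Phi a <= Phi b.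
Proof. intros [Hab| ->]; [left; now apply Phi_lt | lra]. Qed.

Lemma Phi_0 : Phi 0 = / 2.
Proof. unfold Phi; rewrite RInt_point; unfold zero; simpl; ring. Qed.

Lemma Phi_ge_half y : 0 <= y -> / 2 <= Phi y.
Proof. intros; rewrite <- Phi_0; now apply Phi_le. Qed.

Lemma Phi_sub_le a b : a <= b -> Phi b - Phi a <= (b - a) / 2.
Proof.
  intros Hab; rewrite Phi_sub.
  replace ((b - a) / 2) with (RInt (fun _ => / 2) a b).
  - apply RInt_le; auto using ex_RInt_phi_dens, ex_RInt_const, phi_dens_le_half.
  - rewrite RInt_const; unfold scal; simpl; unfold mult; simpl; field.
Qed.

Lemma Phi_continuity_pt x : continuity_pt Phi x.
Proof.
  assert (Hd : is_derive (RInt phi_dens 0) x (phi_dens x)).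
  { apply is_derive_RInt with 0; [|apply phi_dens_continuous].
    apply filter_forall; intros.
    apply (RInt_correct (V := R_CompleteNormedModule)), ex_RInt_phi_dens. }
  assert (Hc : continuity_pt (RInt phi_dens 0) x).
  { apply continuity_pt_filterlim.
    apply (ex_derive_continuous (K := R_AbsRing) (V := R_NormedModule)).
    eexists; exact Hd. }
  unfold Phi; change (continuity_pt (plus_fct (fun _ => / 2) (RInt phi_dens 0)) x).
  apply continuity_pt_plus; auto.
  apply continuity_pt_const; intros ? ?; auto.
Qed.

Lemma F2_above_cutoff x t c : 0 < c -> c < x ->
  F2 x t c = (Phi (- c - t) + (Phi (x - t) - Phi (c - t)))
             / (Phi (- c - t) + Phi (- c + t)).
Proof.
  intros hc hx; unfold F2, ind_gt.
  rewrite Rmin_right by (apply Phi_le; lra).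
  destruct (Rlt_dec c x); [f_equal; ring | lra].
Qed.

Lemma Phi_pos_of_F2_bounds c : 0 < c ->
  (forall t, 0 < F2 (c + 1) t c < 1) -> forall y, 0 < Phi y.
Proof.
  intros hc hF y; destruct (Rlt_or_le 0 (Phi y)) as [|Hy]; auto; exfalso.
  set (t := c + 1 + Rabs y).
  pose proof (Rle_abs (- y)); rewrite Rabs_Ropp in *.
  assert (Hnum : Phi (- c - t) + (Phi (c + 1 - t) - Phi (c - t)) < 0).
  { assert (Phi (- c - t) < Phi (c - t)) by (apply Phi_lt; lra).
    assert (Phi (c + 1 - t) <= Phi y) by (apply Phi_le; unfold t; lra).
    lra. }
  (* a negative numerator with quotient in (0, 1) forces a still smaller denominator *)
  assert (Hden : Phi (- c - t) + Phi (- c + t)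
                 < Phi (- c - t) + (Phi (c + 1 - t) - Phi (c - t))).
  { specialize (hF t); rewrite F2_above_cutoff in hF by lra.
    revert hF Hnum; generalize (Phi (- c - t) + (Phi (c + 1 - t) - Phi (c - t))),
      (Phi (- c - t) + Phi (- c + t)); intros n d [Hpos Hlt1] Hn.
    destruct (Rtotal_order d 0) as [Hd|[->|Hd]].
    - apply Rmult_lt_reg_r with (- / d); [apply Ropp_0_gt_lt_contravar, Rinv_lt_0_compat; lra|].
      replace (d * - / d) with (-1) by (field; lra).
      replace (n * - / d) with (- (n / d)) by (field; lra); lra.
    - unfold Rdiv in Hpos; rewrite Rinv_0 in Hpos; lra.
    - pose proof (Rinv_0_lt_compat d Hd); unfold Rdiv in Hpos; nra. }
  assert (/ 2 <= Phi (- c + t)) by (apply Phi_ge_half; unfold t; pose proof (Rabs_pos y); lra).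
  assert (Phi (c + 1 - t) - Phi (c - t) <= ((c + 1 - t) - (c - t)) / 2)
    by (apply Phi_sub_le; lra).
  lra.
Qed.

Section LimitingEquation.

Variable c : R.
Hypothesis hc : 0 < c.
Hypothesis Phi_pos : forall y, 0 < Phi y.

Definition tail_mass t := Phi (- c - t) + Phi (- c + t).

Lemma tail_mass_pos t : 0 < tail_mass t.
Proof. unfold tail_mass; pose proof (Phi_pos (- c - t)); pose proof (Phi_pos (- c + t)); lra. Qed.

Lemma tail_mass_gt_half t : t <= - c -> / 2 < tail_mass t.
Proof.
  intros; unfold tail_mass.
  pose proof (Phi_ge_half (- c - t)); pose proof (Phi_pos (- c + t)); lra.
Qed.

Lemma G2_decreasing t1 t2 : t1 < t2 -> G2 t2 c < G2 t1 c.
Proof.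
  intros Ht; unfold G2; fold (tail_mass t1) (tail_mass t2).
  pose proof (tail_mass_pos t1); pose proof (tail_mass_pos t2).
  apply Rmult_lt_reg_r with (tail_mass t1 * tail_mass t2); [nra|].
  replace (Phi (- c - t2) / tail_mass t2 * (tail_mass t1 * tail_mass t2))
    with (Phi (- c - t2) * tail_mass t1) by (field; lra).
  replace (Phi (- c - t1) / tail_mass t1 * (tail_mass t1 * tail_mass t2))
    with (Phi (- c - t1) * tail_mass t2) by (field; lra).
  unfold tail_mass.
  assert (Phi (- c - t2) < Phi (- c - t1)) by (apply Phi_lt; lra).
  assert (Phi (- c + t1) < Phi (- c + t2)) by (apply Phi_lt; lra).
  pose proof (Phi_pos (- c - t2)); pose proof (Phi_pos (- c + t1)); nra.
Qed.

Lemma G2_inj t1 t2 : G2 t1 c = G2 t2 c -> t1 = t2.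
Proof.
  intros Heq; destruct (Rtotal_order t1 t2) as [Ht|[Ht|Ht]]; auto;
    pose proof (G2_decreasing _ _ Ht); lra.
Qed.

Lemma G2_0 : G2 0 c = / 2.
Proof.
  unfold G2; replace (- c - 0) with (- c) by ring; replace (- c + 0) with (- c) by ring.
  pose proof (Phi_pos (- c)); field; lra.
Qed.

Lemma G2_continuity : continuity (fun t => G2 t c).
Proof.
  intros t.
  assert (Hl : continuity_pt (fun t => Phi (- c - t)) t).
  { apply (continuity_pt_comp (fun t => - c - t) Phi); [reg | apply Phi_continuity_pt]. }
  assert (Hr : continuity_pt (fun t => Phi (- c + t)) t).
  { apply (continuity_pt_comp (fun t => - c + t) Phi); [reg | apply Phi_continuity_pt]. }
  apply (continuity_pt_div (fun t => Phi (- c - t)) tail_mass); auto.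
  - apply (continuity_pt_plus (fun t => Phi (- c - t)) (fun t => Phi (- c + t))); auto.
  - pose proof (tail_mass_pos t); lra.
Qed.

Lemma F2_sub_G2 x t : c < x ->
  F2 x t c - G2 t c = (Phi (x - t) - Phi (c - t)) / tail_mass t.
Proof.
  intros Hx; rewrite F2_above_cutoff by lra; unfold G2; fold (tail_mass t).
  pose proof (tail_mass_pos t); field; lra.
Qed.

Lemma G2_lt_F2 x t : c < x -> G2 t c < F2 x t c.
Proof.
  intros Hx; enough (0 < F2 x t c - G2 t c) by lra.
  rewrite F2_sub_G2 by lra; apply Rdiv_lt_0_compat; [|apply tail_mass_pos].
  enough (Phi (c - t) < Phi (x - t)) by lra; apply Phi_lt; lra.
Qed.

Lemma F2_sub_G2_le x t : c < x ->
  F2 x t c - G2 t c <= (x - c) / 2 / tail_mass t.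
Proof.
  intros Hx; rewrite F2_sub_G2 by lra.
  apply Rmult_le_compat_r; [left; apply Rinv_0_lt_compat, tail_mass_pos|].
  replace (x - c) with ((x - t) - (c - t)) by ring; apply Phi_sub_le; lra.
Qed.

Lemma F2_lt_of_near_cutoff x t q : c < x -> G2 t c < q ->
  x - c < 2 * (q - G2 t c) * tail_mass t -> F2 x t c < q.
Proof.
  intros Hx Hq Hnear; pose proof (F2_sub_G2_le x t Hx); pose proof (tail_mass_pos t).
  enough ((x - c) / 2 / tail_mass t < q - G2 t c) by lra.
  apply Rmult_lt_reg_r with (2 * tail_mass t); [lra|].
  replace ((x - c) / 2 / tail_mass t * (2 * tail_mass t)) with (x - c) by (field; lra).
  lra.
Qed.

Variable p : R.
Hypothesis hp : 0 < p < 1.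

Lemma G2_eq_exists :
  (forall x, c < x -> forall t1 t2, t1 <= t2 -> F2 x t2 c <= F2 x t1 c) ->
  (forall x, c < x -> forall q, 0 < q < 1 -> exists t, F2 x t c = q) ->
  exists L, G2 L c = p.
Proof.
  intros Fmono Fsurj.
  destruct (Fsurj (c + 1) ltac:(lra) p hp) as [thi Hthi].
  assert (Ghi : G2 thi c < p) by (rewrite <- Hthi; apply G2_lt_F2; lra).
  (* G2 is above F2 (c + dl) up to dl on the half-line t <= -c, where tail_mass > 1/2 *)
  set (dl := (1 - p) / 2).
  destruct (Fsurj (c + dl) ltac:(unfold dl; lra) (p + dl) ltac:(unfold dl; lra))
    as [t' Ht'].
  set (tlo := Rmin t' (- c)).
  assert (Glo : p < G2 tlo c).
  { assert (p + dl <= F2 (c + dl) tlo c)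
      by (rewrite <- Ht'; apply Fmono; [unfold dl; lra | apply Rmin_l]).
    pose proof (F2_sub_G2_le (c + dl) tlo ltac:(unfold dl; lra)).
    pose proof (tail_mass_gt_half tlo (Rmin_r _ _)).
    assert ((c + dl - c) / 2 / tail_mass tlo < dl).
    { apply Rmult_lt_reg_r with (tail_mass tlo); [lra|].
      replace ((c + dl - c) / 2 / tail_mass tlo * tail_mass tlo) with (dl / 2) by (field; lra).
      unfold dl in *; nra. }
    lra. }
  assert (Hlh : tlo < thi).
  { destruct (Rlt_or_le tlo thi) as [|[Hlt| ->]]; auto;
      [pose proof (G2_decreasing _ _ Hlt) | ]; lra. }
  assert (Hcont : continuity (fun t => p - G2 t c)).
  { intros t; apply (continuity_pt_minus (fun _ => p) (fun t => G2 t c));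
      [apply continuity_pt_const; intros ? ?; auto | apply G2_continuity]. }
  destruct (IVT _ tlo thi Hcont Hlh ltac:(simpl; lra) ltac:(simpl; lra)) as [L [_ HL]].
  exists L; simpl in HL; lra.
Qed.

Lemma theta_tendsto_G2_root L (th : R -> R) :
  G2 L c = p ->
  (forall x, c < x -> forall t1 t2, t1 < t2 -> F2 x t2 c < F2 x t1 c) ->
  (forall x, c < x -> F2 x (th x) c = p) ->
  filterlim th (at_right c) (locally L).
Proof.
  intros HL Fdec hth; apply filterlim_locally; intros eps.
  set (s := L + eps).
  assert (Hgap : G2 s c < p) by (rewrite <- HL; apply G2_decreasing; unfold s; destruct eps; simpl; lra).
  assert (Heta : 0 < 2 * (p - G2 s c) * tail_mass s) by (pose proof (tail_mass_pos s); nra).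
  exists (mkposreal _ Heta); intros y Hy Hcy.
  unfold ball in Hy |- *; simpl in Hy |- *;
    unfold AbsRing_ball, abs, minus, plus, opp in Hy |- *; simpl in Hy |- *.
  apply Rabs_def2 in Hy as [Hy _].
  assert (Hlo : L < th y).
  { destruct (Rlt_or_le L (th y)) as [|Hle]; auto.
    pose proof (G2_lt_F2 y (th y) Hcy) as Hgt; rewrite (hth y Hcy) in Hgt.
    destruct Hle as [Hlt|Heq]; [pose proof (G2_decreasing _ _ Hlt) | rewrite Heq in Hgt]; lra. }
  assert (Hhi : th y < s).
  { assert (Hs : F2 y s c < p) by (apply F2_lt_of_near_cutoff; auto; lra).
    destruct (Rlt_or_le (th y) s) as [|[Hlt|Heq]]; auto.
    - pose proof (Fdec y Hcy _ _ Hlt); rewrite (hth y Hcy) in *; lra.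
    - rewrite Heq, (hth y Hcy) in Hs; lra. }
  apply Rabs_def1; unfold s in Hhi; lra.
Qed.

End LimitingEquation.

Theorem mainTheorem5 (c p : R) (hc : 0 < c) (hp : 0 < p < 1)
  (hF : forall x, c < x ->
     (forall t1 t2, t1 < t2 -> F2 x t2 c < F2 x t1 c) /\
     (forall t, continuity_pt (fun th => F2 x th c) t) /\
     (forall t, 0 < F2 x t c < 1) /\
     (forall q, 0 < q < 1 -> exists t, F2 x t c = q))
  (th : R -> R) (hth : forall x, c < x -> F2 x (th x) c = p) :
  exists L : R,
    (G2 L c = p /\ forall t, G2 t c = p -> t = L) /\
    filterlim th (at_right c) (locally L) /\
    (p = / 2 -> L = 0).
Proof.
  assert (Phi_pos : forall y, 0 < Phi y)
    by (apply (Phi_pos_of_F2_bounds c hc), hF; lra).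
  assert (Fdec : forall x, c < x -> forall t1 t2, t1 < t2 -> F2 x t2 c < F2 x t1 c)
    by (intros x Hx; apply (hF x Hx)).
  assert (Fmono : forall x, c < x -> forall t1 t2, t1 <= t2 -> F2 x t2 c <= F2 x t1 c)
    by (intros x Hx t1 t2 [Ht| ->]; [left; now apply Fdec | lra]).
  assert (Fsurj : forall x, c < x -> forall q, 0 < q < 1 -> exists t, F2 x t c = q)
    by (intros x Hx; apply (hF x Hx)).
  destruct (G2_eq_exists c hc Phi_pos p hp Fmono Fsurj) as [L HL].
  exists L; repeat split; auto.
  - intros t Ht; apply (G2_inj c Phi_pos); congruence.
  - now apply (theta_tendsto_G2_root c hc Phi_pos p L th).
  - intros ->; apply (G2_inj c Phi_pos); rewrite HL, G2_0; auto.
Qed.
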